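(* Let $\mathcal H$ be a class of functions $\mathcal X\to[-1,1]$ and $\mathcal F$ a class of functions $\mathcal Z\to[-1,1]$, and let samples $(y_i,x_i,z_i)_{i=1}^n$ with $y_i\in[-1,1]$ be given. Assume access to $\mathrm{Oracle}_{\mathcal F}(z_{1:n},u_{1:n})\in\arg\min_{f\in\mathcal F}\frac1n\sum_i(u_i-f(z_i))^2$ and $\mathrm{Oracle}_{\mathcal H}(x_{1:n},v_{1:n},w_{1:n})\in\arg\max_{h\in\mathcal H}\frac1n\sum_iw_i\Pr_{\xi_i\sim\mathrm{Bernoulli}((1+h(x_i))/2)}[v_i=\xi_i]$. Consider the algorithm that for $t=1,\dots,T$ sets $$u_i^t=\tfrac12\Big(y_i-\tfrac1{t-1}\textstyle\sum_{\tau=1}^{t-1}h_\tau(x_i)\Big),\quad f_t=\mathrm{Oracle}_{\mathcal F}(z_{1:n},u^t_{1:n}),$$ $$v_i^t=\mathbf 1\{f_t(z_i)>0\},\quad w_i^t=|f_t(z_i)|,\quad h_t=\mathrm{Oracle}_{\mathcal H}(x_{1:n},v^t_{1:n},w^t_{1:n})$$ (for $t=1$ the empty average is interpreted as $0$). Suppose the set $A=\{(f(z_1),\dots,f(z_n)):f\in\mathcal F\}$ is convex. Then the ensemble $\bar h=\frac1T\sum_{t=1}^Th_t$ is an $\frac{8(\log T+1)}{T}$-approximate solution to the minimax problem $\min_{h\in\mathcal H}\sup_{f\in\mathcal F}\Psi_n(h,f)-\|f\|_{2,n}^2$, i.e. $\sup_{f\in\mathcal F}\big(\Psi_n(\bar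 h,f)-\|f\|_{2,n}^2\big)\le\inf_{h\in\mathcal H}\sup_{f\in\mathcal F}\big(\Psi_n(h,f)-\|f\|_{2,n}^2\big)+\frac{8(\log T+1)}{T}$.
   Context: $\Psi_n(h,f)=\frac1n\sum_i(y_i-h(x_i))f(z_i)$ and $\|f\|_{2,n}^2=\frac1n\sum_if(z_i)^2$. *)

From mathcomp Require Import all_boot all_order all_algebra.
From mathcomp Require Import boolp classical_sets reals exp.
Set Implicit Arguments. Unset Strict Implicit. Unset Printing Implicit Defensive.
Import Order.TTheory GRing.Theory Num.Theory.
Local Open Scope ring_scope.
Local Open Scope classical_set_scope.

Section Defs.
Variables (R : realType) (X Z : Type) (n : nat).
Variables (y : 'I_n -> R) (x : 'I_n -> X) (z : 'I_n -> Z).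

Definition Psi (h : X -> R) (f : Z -> R) : R :=
  n%:R^-1 * \sum_(i < n) (y i - h (x i)) * f (z i).

Definition norm2n_sq (f : Z -> R) : R := n%:R^-1 * \sum_(i < n) f (z i) ^+ 2.

Definition Phi (h : X -> R) (f : Z -> R) : R := Psi h f - norm2n_sq f.

Definition sq_loss (u : 'I_n -> R) (f : Z -> R) : R :=
  n%:R^-1 * \sum_(i < n) (u i - f (z i)) ^+ 2.

(* Pr_{xi ~ Bernoulli(p)}[b = xi] for b in {0,1} (true = 1) *)
Definition bern_prob (p : R) (b : bool) : R := if b then p else 1 - p.

Definition H_obj (v : 'I_n -> bool) (w : 'I_n -> R) (h : X -> R) : R :=
  n%:R^-1 * \sum_(i < n) w i * bern_prob ((1 + h (x i)) / 2) (v i).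

Definition is_oracleF (F : set (Z -> R)) (OF : ('I_n -> R) -> Z -> R) : Prop :=
  forall u, F (OF u) /\ forall f, F f -> sq_loss u (OF u) <= sq_loss u f.

Definition is_oracleH (H : set (X -> R))
    (OH : ('I_n -> bool) -> ('I_n -> R) -> X -> R) : Prop :=
  forall v w, H (OH v w) /\ forall h, H h -> H_obj v w h <= H_obj v w (OH v w).

Definition sample_set_convex (F : set (Z -> R)) : Prop :=
  forall f g, F f -> F g -> forall l : R, 0 <= l <= 1 ->
    exists k, F k /\ forall i, k (z i) = l * f (z i) + (1 - l) * g (z i).

Definition avg_prev (hs : seq (X -> R)) (a : X) : R :=
  if hs is [::] then 0 else (\sum_(h <- hs) h a) / (size hs)%:R.

Variables (OF : ('I_n -> R) -> Z -> R)
          (OH : ('I_n -> bool) -> ('I_n -> R) -> X -> R).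

Definition step (hs : seq (X -> R)) : X -> R :=
  let u := fun i => (y i - avg_prev hs (x i)) / 2 in
  let f := OF u in
  OH (fun i => 0 < f (z i)) (fun i => `|f (z i)|).

Fixpoint run (t : nat) : seq (X -> R) :=
  match t with
  | 0 => [::]
  | t'.+1 => rcons (run t') (step (run t'))
  end.

Definition ensemble (T : nat) (a : X) : R := (\sum_(h <- run T) h a) / T%:R.

End Defs.

From mathcomp Require Import all_boot all_order all_algebra.
From mathcomp Require Import boolp classical_sets reals exp.
From mathcomp Require Import ring lra.
Set Implicit Arguments. Unset Strict Implicit. Unset Printing Implicit Defensive.
Import Order.TTheory GRing.Theory Num.Theory.
Local Open Scope ring_scope.
Local Open Scope classical_set_scope.

(* Write [Phi = - loss] with [loss h f = n^-1 sum_i (f(z_i)^2 - (y_i - h(x_i)) f(z_i))],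
   affine in h and convex in f. The algorithm is a game in which the H-player
   best-responds and the F-player follows the leader: the cumulative loss of f
   against h_1, ..., h_{t-1} is (t - 1) times the squared distance from f to u^t
   up to a constant, so f_t = Oracle_F(u^t) is the leader, namely the projection
   of u^t onto the convex sample set. Projections are firmly nonexpansive and u^t
   drifts by O(1/t), so consecutive leaders change the loss by at most 8/t and
   the be-the-leader lemma bounds the F-player's regret by 8 (1 + ln T). Jensen's
   inequality in f and linearity in h turn this regret bound into the minimax
   inequality. *)

Lemma ler_sum_of_ler_mean (R : numFieldType) m (P Q : 'I_m -> R) :
  m%:R^-1 * \sum_i P i <= m%:R^-1 * \sum_i Q i -> \sum_i P i <= \sum_i Q i.
Proof.
case: m P Q => [|m] P Q; first by rewrite !big_ord0.
by rewrite ler_pM2l // invr_gt0 ltr0n.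
Qed.

Lemma mulVn_le1 (R : numFieldType) m : (m%:R : R)^-1 * m%:R <= 1.
Proof. by case: m => [|m]; rewrite ?mulr0 // mulVf // pnatr_eq0. Qed.

Lemma harmonic_le_1Dln (R : realType) T :
  (0 < T)%N -> \sum_(t < T) (t.+1%:R : R)^-1 <= 1 + ln T%:R.
Proof.
case: T => [//|T] _; elim: T => [|T IH]; first by rewrite big_ord1 ln1 invr1 addr0.
rewrite big_ord_recr /=.
suff : (T.+2%:R : R)^-1 <= ln T.+2%:R - ln T.+1%:R.
  by move: IH; move: (\sum_(i < T.+1) _) (T.+2%:R^-1 : R) (ln _) (ln _) => *; lra.
have -> : ln (T.+2%:R : R) - ln T.+1%:R = - ln (1 - T.+2%:R^-1).
  have -> : 1 - T.+2%:R^-1 = T.+1%:R / T.+2%:R :> R.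
    by field; rewrite -natrD pnatr_eq0.
  by rewrite ln_div ?posrE ?ltr0n // opprB.
rewrite lerNr; apply: le_ln1Dx.
by rewrite ltrN2 invf_lt1 ?ltr0n // ltr1n.
Qed.

Lemma le0_of_linear_le_quadratic (R : realFieldType) (S D : R) :
  (forall l, 0 < l <= 1 -> 2 * l * S <= l ^+ 2 * D) -> S <= 0.
Proof.
move=> lin_le_quad; rewrite leNgt; apply/negP => S0.
have := lin_le_quad 1; rewrite ltr01 lexx expr1n => /(_ isT) S_le_D.
have D0 : 0 < D by lra.
have l0 : 0 < S / D by rewrite divr_gt0.
have l1 : S / D <= 1 by rewrite ler_pdivrMr // mul1r; lra.
have lD : S / D * D = S by rewrite divfK ?gt_eqF.
have := lin_le_quad (S / D); rewrite l0 l1 => /(_ isT).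
move: (S / D) l0 lD => l; nra.
Qed.

Lemma segment_minimizer_obtuse (R : realFieldType) m (w p q : 'I_m -> R) :
  (forall l, 0 < l <= 1 ->
     \sum_i (w i - p i) ^+ 2 <= \sum_i (w i - (l * q i + (1 - l) * p i)) ^+ 2) ->
  \sum_i (w i - p i) * (q i - p i) <= 0.
Proof.
move=> p_min; apply: le0_of_linear_le_quadratic (\sum_i (q i - p i) ^+ 2) _ => l l01.
rewrite -subr_ge0 !mulr_sumr -sumrB.
have := p_min l l01; rewrite -subr_ge0 -sumrB.
by congr (0 <= _); apply: eq_bigr => i _; ring.
Qed.

Lemma mulr_le_2sqrD8 (R : realFieldType) (d b : R) :
  -8 <= b <= 8 -> d * b <= 2 * d ^+ 2 + 8.
Proof. by move=> b8; have := sqr_ge0 (4 * d - b); nra. Qed.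

Lemma abs_bern_prob_sign (R : realType) (c a : R) :
  `|c| * bern_prob ((1 + a) / 2) (0 < c) = (`|c| + c * a) / 2.
Proof.
rewrite /bern_prob; case: ltrP => c0.
  by rewrite ger0_norm ?ltW //; field.
by rewrite ler0_norm //; field.
Qed.

Section FollowTheLeader.
Variables (R : numDomainType) (A : Type) (K : set A).
Variables (loss : nat -> A -> R) (lead : nat -> A).
Hypothesis lead_in : forall t, K (lead t).
Hypothesis lead_minimizes :
  forall t g, K g -> \sum_(s < t) loss s (lead t) <= \sum_(s < t) loss s g.

Lemma be_the_leader m g :
  K g -> \sum_(t < m) loss t (lead t.+1) <= \sum_(t < m) loss t g.
Proof.
elim: m g => [|m IH] g Kg; first by rewrite !big_ord0.
apply: le_trans _ (lead_minimizes m.+1 Kg).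
rewrite !big_ord_recr lerD2r; exact: IH (lead_in m.+1).
Qed.

Lemma follow_the_leader_regret m g : K g ->
  \sum_(t < m) loss t (lead t) - \sum_(t < m) loss t g
  <= \sum_(t < m) (loss t (lead t) - loss t (lead t.+1)).
Proof. by move=> Kg; rewrite sumrB lerD2l lerN2 be_the_leader. Qed.

End FollowTheLeader.

Section SampleJensen.
Variables (R : realType) (Z : Type) (n : nat) (z : 'I_n -> Z) (F : set (Z -> R)).
Hypothesis F_convex : sample_set_convex z F.
Variable phi : (Z -> R) -> R.
Hypothesis phi_convex : forall f g k l, 0 <= l <= 1 ->
  (forall i, k (z i) = l * f (z i) + (1 - l) * g (z i)) ->
  phi k <= l * phi f + (1 - l) * phi g.

Lemma sample_jensen (fs : nat -> Z -> R) m : (forall t, F (fs t)) -> (0 < m)%N ->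
  exists2 k, F k & m%:R * phi k <= \sum_(t < m) phi (fs t).
Proof.
move=> Ffs; case: m => [//|m] _; elim: m => [|m [k Fk le_k]].
  by exists (fs 0%N); rewrite // big_ord1 mul1r.
have m2 : (0 : R) < m.+2%:R by rewrite ltr0n.
have l01 : 0 <= (m.+1%:R / m.+2%:R : R) <= 1.
  by rewrite divr_ge0 //= ler_pdivrMr // mul1r ler_nat.
have [k' [Fk' k'E]] := F_convex Fk (Ffs m.+1) l01.
exists k' => //; rewrite big_ord_recr /=.
apply: le_trans (ler_wpM2l (ltW m2) (phi_convex l01 k'E)) _.
have e1 : m.+2%:R * (m.+1%:R / m.+2%:R) = m.+1%:R :> R.
  by rewrite mulrC divfK ?gt_eqF.
have e2 : m.+2%:R * (1 - m.+1%:R / m.+2%:R) = 1 :> R.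
  by field; rewrite -natrD pnatr_eq0.
rewrite mulrDr mulrA e1 mulrA e2 mul1r lerD2r.
exact: le_k.
Qed.

End SampleJensen.

(* Also for [hs = [::]], where both sides are [0] since [x / 0 = 0]. *)
Lemma avg_prevE (R : realType) (X : Type) (hs : seq (X -> R)) a :
  avg_prev hs a = (\sum_(h <- hs) h a) / (size hs)%:R.
Proof. by case: hs => [|h hs] //=; rewrite big_nil mul0r. Qed.

Section Game.
Variables (R : realType) (X Z : Type) (n : nat).
Variables (H : set (X -> R)) (F : set (Z -> R)).
Variables (y : 'I_n -> R) (x : 'I_n -> X) (z : 'I_n -> Z).
Variables (OF : ('I_n -> R) -> Z -> R)
          (OH : ('I_n -> bool) -> ('I_n -> R) -> X -> R).
Hypothesis H_bounded : forall h, H h -> forall a, -1 <= h a <= 1.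
Hypothesis F_bounded : forall f, F f -> forall c, -1 <= f c <= 1.
Hypothesis y_bounded : forall i, -1 <= y i <= 1.
Hypothesis oracleF : is_oracleF z F OF.
Hypothesis oracleH : is_oracleH x H OH.
Hypothesis F_convex : sample_set_convex z F.

Definition loss (g : X -> R) (f : Z -> R) : R :=
  n%:R^-1 * \sum_i (f (z i) ^+ 2 - (y i - g (x i)) * f (z i)).

Lemma Phi_loss g f : Phi y x z g f = - loss g f.
Proof.
rewrite /Phi /Psi /norm2n_sq /loss -mulrBr -sumrB -mulrN -sumrN.
by congr (_ * _); apply: eq_bigr => i _; ring.
Qed.

Lemma loss_convex g f1 f2 k l : 0 <= l <= 1 ->
  (forall i, k (z i) = l * f1 (z i) + (1 - l) * f2 (z i)) ->
  loss g k <= l * loss g f1 + (1 - l) * loss g f2.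
Proof.
move=> /andP[l0 l1] kE; rewrite /loss mulrCA [(1 - l) * _]mulrCA -mulrDr.
rewrite ler_wpM2l ?invr_ge0 // !mulr_sumr -big_split /=.
apply: ler_sum => i _; rewrite kE.
have := sqr_ge0 (f1 (z i) - f2 (z i)).
have := mulr_ge0 l0 (ltac:(lra) : 0 <= 1 - l).
move: (f1 (z i)) (f2 (z i)) => a b; nra.
Qed.

Lemma Phi_le1 h f : H h -> Phi y x z h f <= 1.
Proof.
move=> Hh; rewrite /Phi /Psi /norm2n_sq -mulrBr -sumrB.
apply: le_trans (mulVn_le1 R n); rewrite ler_wpM2l ?invr_ge0 //.
rewrite -[in X in _ <= X](card_ord n) -sumr_const; apply: ler_sum => i _.
have := H_bounded Hh (x i); have := y_bounded i.
have := sqr_ge0 (2 * f (z i) - (y i - h (x i))).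
move: (f (z i)) (y i) (h (x i)) => a b c; nra.
Qed.

(* Rounds are counted from 0: [hyp t], [lead t] and [target t] are the paper's
   h_{t+1}, f_{t+1} and u^{t+1}. *)
Definition hyp t := step y x z OF OH (run y x z OF OH t).
Definition target t i := (y i - avg_prev (run y x z OF OH t) (x i)) / 2.
Definition lead t := OF (target t).
Definition hsum t a := \sum_(s < t) hyp s a.

Lemma run_iota t : run y x z OF OH t = [seq hyp s | s <- iota 0 t].
Proof.
elim: t => [//|t IH].
by rewrite [LHS]/= -/(hyp t) IH -addn1 iotaD map_cat cats1.
Qed.

Lemma sum_run t a : \sum_(h <- run y x z OF OH t) h a = hsum t a.
Proof. by rewrite run_iota big_map -[t in iota _ t]subn0 big_mkord. Qed.

Lemma target_mul t i : 2 * t%:R * target t i = t%:R * y i - hsum t (x i).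
Proof.
rewrite /target avg_prevE sum_run run_iota size_map size_iota.
case: t => [|t]; first by rewrite /hsum big_ord0; ring.
by field; rewrite addrC natr1 pnatr_eq0.
Qed.

Lemma hyp_in t : H (hyp t).
Proof. exact: (oracleH _ _).1. Qed.

Lemma lead_in t : F (lead t).
Proof. exact: (oracleF _).1. Qed.

Lemma hyp_bounded t a : -1 <= hyp t a <= 1.
Proof. exact: H_bounded (hyp_in t) a. Qed.

Lemma hsumS t a : hsum t.+1 a = hsum t a + hyp t a.
Proof. exact: big_ord_recr. Qed.

Lemma hsum_bounded t a : - t%:R <= hsum t a <= t%:R.
Proof.
elim: t => [|t IH]; first by rewrite /hsum big_ord0 oppr0 lexx.
by rewrite hsumS -natr1; have := hyp_bounded t a; lra.
Qed.

Lemma target_bounded t i : -1 <= target t i <= 1.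
Proof.
have := target_mul t i; have := hsum_bounded t (x i); have := y_bounded i.
case: t => [|t]; first by rewrite /target avg_prevE /= big_nil mul0r subr0; lra.
have : (0 : R) < t.+1%:R by rewrite ltr0n.
move: (t.+1%:R : R) => k; nra.
Qed.

Lemma target_rec t i :
  t.+1%:R * (target t i - target t.+1 i) = target t i - (y i - hyp t (x i)) / 2.
Proof.
have := target_mul t i; have := target_mul t.+1 i; rewrite hsumS -[t.+1%:R]natr1.
move: (t%:R : R) (hsum t (x i)) (target t i) (target t.+1 i) (hyp t (x i)) => k s u u' h.
by move=> *; nra.
Qed.

Lemma sum_loss_hyp t f : \sum_(s < t) loss (hyp s) f =
  n%:R^-1 * \sum_i (t%:R * (f (z i) ^+ 2 - y i * f (z i)) + hsum t (x i) * f (z i)).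
Proof.
rewrite /loss -mulr_sumr exchange_big; congr (_ * _); apply: eq_bigr => i _.
elim: t => [|t IH]; first by rewrite big_ord0 /hsum big_ord0; ring.
by rewrite big_ord_recr /= IH hsumS -natr1; ring.
Qed.

Lemma sum_loss_target t f : \sum_(s < t) loss (hyp s) f =
  t%:R * (sq_loss z (target t) f - n%:R^-1 * \sum_i target t i ^+ 2).
Proof.
rewrite sum_loss_hyp /sq_loss -mulrBr mulrCA; congr (_ * _).
rewrite -sumrB mulr_sumr; apply: eq_bigr => i _.
rewrite (_ : hsum t (x i) = t%:R * y i - 2 * t%:R * target t i); first by ring.
by rewrite target_mul; ring.
Qed.

Lemma lead_minimizes t g : F g ->
  \sum_(s < t) loss (hyp s) (lead t) <= \sum_(s < t) loss (hyp s) g.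
Proof.
by move=> Fg; rewrite !sum_loss_target ler_wpM2l ?ler0n // lerD2r (oracleF _).2.
Qed.

Lemma lead_obtuse t g : F g ->
  \sum_i (target t i - lead t (z i)) * (g (z i) - lead t (z i)) <= 0.
Proof.
move=> Fg.
apply: (@segment_minimizer_obtuse _ _ _ (fun i => lead t (z i)) (fun i => g (z i))).
move=> l /andP[l0 l1]; have l01 : 0 <= l <= 1 by rewrite ltW.
have [k [Fk kE]] := F_convex Fg (lead_in t) l01.
under [X in _ <= X]eq_bigr do rewrite -kE.
exact/ler_sum_of_ler_mean/(oracleF _).2.
Qed.

Lemma lead_firmly_nonexpansive t :
  \sum_i (lead t (z i) - lead t.+1 (z i)) ^+ 2
  <= \sum_i (lead t (z i) - lead t.+1 (z i)) * (target t i - target t.+1 i).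
Proof.
have V1 := lead_obtuse t (lead_in t.+1); have V2 := lead_obtuse t.+1 (lead_in t).
have := lerD V1 V2; rewrite addr0 -big_split /= => V12.
rewrite -subr_le0 -sumrB; apply: le_trans _ V12.
by apply: ler_sum => i _; lra.
Qed.

Lemma lead_stable t :
  t.+1%:R * (loss (hyp t) (lead t) - loss (hyp t) (lead t.+1)) <= 8.
Proof.
set k : R := t.+1%:R; pose v i := y i - hyp t (x i).
pose d i := lead t (z i) - lead t.+1 (z i); pose e i := target t i - target t.+1 i.
have termwise i : k * ((lead t (z i) ^+ 2 - v i * lead t (z i))
                      - (lead t.+1 (z i) ^+ 2 - v i * lead t.+1 (z i)))
                  <= 8 + 2 * k ^+ 2 * (d i ^+ 2 - d i * e i).
  (* AM-GM on [k d * b], where [b] absorbs the drift [k e] of the target; the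
     leftover [d^2 - d e] sums to a nonpositive number by firm nonexpansiveness. *)
  pose b := lead t (z i) + lead t.+1 (z i) - v i + 2 * (k * e i).
  have b8 : -8 <= b <= 8.
    have ke : k * e i = target t i - v i / 2 := target_rec t i.
    have := F_bounded (lead_in t) (z i); have := F_bounded (lead_in t.+1) (z i).
    have := target_bounded t i; have := y_bounded i; have := hyp_bounded t (x i).
    by rewrite /b ke /v; lra.
  have := mulr_le_2sqrD8 (k * d i) b8.
  have -> : k * ((lead t (z i) ^+ 2 - v i * lead t (z i))
                - (lead t.+1 (z i) ^+ 2 - v i * lead t.+1 (z i)))
            = k * d i * b - 2 * k ^+ 2 * (d i * e i) by rewrite /b /d; ring.
  by rewrite exprMn; lra.
rewrite /loss -mulrBr -sumrB; rewrite [k * _]mulrCA mulr_sumr.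
apply: le_trans (ler_wpM2l _ (ler_sum _ (fun i _ => termwise i))) _.
  by rewrite invr_ge0.
rewrite big_split /= sumr_const card_ord -mulr_sumr mulrDr.
rewrite -[leRHS]addr0 lerD //.
  by rewrite -[8 *+ n]mulr_natr mulrCA ler_piMr // mulVn_le1.
apply: mulr_ge0_le0; first by rewrite invr_ge0.
apply: mulr_ge0_le0; first by rewrite mulr_ge0 ?sqr_ge0.
by rewrite sumrB subr_le0 lead_firmly_nonexpansive.
Qed.

Lemma lead_regret T g : (0 < T)%N -> F g ->
  \sum_(t < T) loss (hyp t) (lead t) - \sum_(t < T) loss (hyp t) g
  <= 8 * (1 + ln T%:R).
Proof.
move=> T0 Fg.
apply: le_trans (follow_the_leader_regret (loss := fun s => loss (hyp s))
                   lead_in lead_minimizes T Fg) _.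
apply: le_trans (ler_wpM2l _ (harmonic_le_1Dln R T0)) => //.
rewrite mulr_sumr; apply: ler_sum => t _.
by rewrite ler_pdivlMr ?ltr0n // mulrC lead_stable.
Qed.

Lemma hyp_best_response t h : H h -> loss h (lead t) <= loss (hyp t) (lead t).
Proof.
move=> Hh; pose c i := lead t (z i).
have : H_obj x (fun i => 0 < c i) (fun i => `|c i|) h
       <= H_obj x (fun i => 0 < c i) (fun i => `|c i|) (hyp t).
  exact: (oracleH _ _).2.
rewrite /H_obj => /ler_sum_of_ler_mean.
under eq_bigr do rewrite abs_bern_prob_sign.
under [X in _ <= X -> _]eq_bigr do rewrite abs_bern_prob_sign.
rewrite -!mulr_suml ler_pM2r ?invr_gt0 // !big_split /= lerD2l => le_corr.
rewrite /loss ler_wpM2l ?invr_ge0 // -subr_ge0 -sumrB.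
rewrite (eq_bigr (fun i => c i * hyp t (x i) - c i * h (x i))) ?sumrB ?subr_ge0 //.
by move=> i _; rewrite /c; ring.
Qed.

Lemma loss_ensemble T f : (0 < T)%N ->
  T%:R * loss (ensemble y x z OF OH T) f = \sum_(t < T) loss (hyp t) f.
Proof.
move=> T0; rewrite sum_loss_hyp /loss mulrCA mulr_sumr; congr (_ * _).
apply: eq_bigr => i _; rewrite /ensemble sum_run.
by field; rewrite pnatr_eq0 -lt0n.
Qed.

Lemma Phi_ensemble_le T h f : (0 < T)%N -> H h -> F f ->
  Phi y x z (ensemble y x z OF OH T) f
  <= sup [set Phi y x z h g | g in F] + 8 * (ln T%:R + 1) / T%:R.
Proof.
move=> T0 Hh Ff; have T0' : (0 : R) < T%:R by rewrite ltr0n.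
have [k Fk jensen] := sample_jensen F_convex (loss_convex h) lead_in T0.
have best_response : \sum_(t < T) loss h (lead t) <= \sum_(t < T) loss (hyp t) (lead t).
  by apply: ler_sum => t _; exact: hyp_best_response.
have regret := lead_regret T0 Ff.
have k_le_sup : Phi y x z h k <= sup [set Phi y x z h g | g in F].
  apply: sup_upper_bound; last by exists k.
  split; first by exists (Phi y x z h k), k.
  by exists 1 => _ [g _ <-]; exact: Phi_le1.
suff : Phi y x z (ensemble y x z OF OH T) f
       <= Phi y x z h k + 8 * (ln T%:R + 1) / T%:R by lra.
rewrite !Phi_loss -(ler_pM2l T0') mulrDr [T%:R * (_ / _)]mulrC divfK ?gt_eqF //.
rewrite !mulrN (loss_ensemble _ T0); lra.
Qed.

End Game.

Theorem theorem3 (R : realType) (X Z : Type) (n T : nat)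
    (H : set (X -> R)) (F : set (Z -> R))
    (y : 'I_n -> R) (x : 'I_n -> X) (z : 'I_n -> Z)
    (OF : ('I_n -> R) -> Z -> R)
    (OH : ('I_n -> bool) -> ('I_n -> R) -> X -> R) :
  (forall h, H h -> forall a, -1 <= h a <= 1) ->
  (forall f, F f -> forall c, -1 <= f c <= 1) ->
  (forall i, -1 <= y i <= 1) ->
  is_oracleF z F OF ->
  is_oracleH x H OH ->
  sample_set_convex z F ->
  (0 < T)%N ->
  sup [set Phi y x z (ensemble y x z OF OH T) f | f in F]
    <= inf [set sup [set Phi y x z h f | f in F] | h in H]
       + 8 * (ln (T%:R : R) + 1) / T%:R.
Proof.
move=> H_bounded F_bounded y_bounded oracleF oracleH F_convex T0.
have H0 : H (OH (fun _ => true) (fun _ => 0)) := (oracleH _ _).1.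
have F0 : F (OF (fun _ => 0)) := (oracleF _).1.
rewrite -lerBlDr; apply: lb_le_inf.
  by exists (sup [set Phi y x z (OH (fun _ => true) (fun _ => 0)) f | f in F]),
    (OH (fun _ => true) (fun _ => 0)).
move=> _ [h Hh <-]; rewrite lerBlDr; apply: ge_sup.
  by exists (Phi y x z (ensemble y x z OF OH T) (OF (fun _ => 0))), (OF (fun _ => 0)).
move=> _ [f Ff <-].
exact: (Phi_ensemble_le H_bounded F_bounded y_bounded oracleF oracleH F_convex T0 Hh Ff).
Qed.
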